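(* Let $T$ be a complete theory with monster model $\mathcal{U}$, $A\subseteq\mathcal{U}$ small, $b$ a finite tuple from $\mathcal{U}$, $\mu\in\mathfrak{M}_x(\mathcal{U})$, $\nu\in\mathfrak{M}_y(\mathcal{U})$, and $\varphi(y,b)\in\mathcal{L}_y(b)$ with $0<\nu(\varphi(y,b))<1$. If $\mu\blacktriangleright_A\nu$, then $\mu\blacktriangleright_{Ab}\nu_{[\varphi]}$.
   Context: For $C\subseteq\mathcal{U}$, $\mathcal{L}_x(C)$ is the Boolean algebra of formulas in $x$ with parameters from $C$ modulo $T$, embedded in $\mathcal{L}_{xy}(C)$ via $\varphi(x)\mapsto\varphi(x)\wedge y=y$; $\mathfrak{M}_x(C)$ is the set of finitely additive probability measures on $\mathcal{L}_x(C)$. For $\omega\in\mathfrak{M}_{xy}(C)$, $\pi_x(\omega)(\varphi(x))=\omega(\varphi(x)\wedge y=y)$ (similarly $\pi_y$); $\omega|_D$ is restriction. $\mathfrak{M}^{\mathrm{Am}}_{xy}(C)$ is the set of $\lambda\in\mathfrak{M}_{xy}(C)$ with $\lambda(\varphi(x)\wedge\psi(y))=\pi_x(\lambda)(\varphi(x))\pi_y(\lambda)(\psi(y))$ for all $\varphi(x)\in\mathcal{L}_x(C),\psi(y)\in\mathcal{L}_y(C)$. For $\lambda\in\mathfrak{M}^{\mathrm{Am}}_{xy}(A)$ with $\pi_x(\lambda)=\mu|_A$: $\operatorname{Amal}(\lambda,\mu)=\{\omega\in\mathfrak{M}^{\mathrm{Am}}_{xy}(\mathcal{U}):\omega|_A=\lambda,\pi_x(\omega)=\mu\}$.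 $\mu\blacktriangleright_A\nu$ means there is $\lambda\in\mathfrak{M}_{xy}(A)$ with $\pi_x(\lambda)=\mu|_A$, $\operatorname{Amal}(\lambda,\mu)\neq\emptyset$, and $\pi_y(\omega)=\nu$ for every $\omega\in\operatorname{Amal}(\lambda,\mu)$. $Ab$ denotes $A$ together with the entries of $b$. The localization is $\nu_{[\varphi]}(\psi(y))=\nu(\varphi(y,b)\wedge\psi(y))/\nu(\varphi(y,b))$. *)

From Stdlib Require Import Reals List.
From mathcomp Require Import all_boot.

Set Implicit Arguments.
Unset Strict Implicit.
Unset Printing Implicit Defensive.

Record lang := Lang {
  fsym : Type; far : fsym -> nat;
  rsym : Type; rar : rsym -> nat }.

Inductive term (L : lang) : Type :=
  | tvar : nat -> term L
  | tapp : forall f : fsym L, ('I_(far f) -> term L) -> term L.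

Inductive formula (L : lang) : Type :=
  | fFalse : formula L
  | fEq : term L -> term L -> formula L
  | fRel : forall r : rsym L, ('I_(rar r) -> term L) -> formula L
  | fImp : formula L -> formula L -> formula L
  | fAll : nat -> formula L -> formula L.

Record structure (L : lang) := Structure {
  carrier :> Type;
  funI : forall f : fsym L, ('I_(far f) -> carrier) -> carrier;
  relI : forall r : rsym L, ('I_(rar r) -> carrier) -> Prop }.

Section Semantics.
Variables (L : lang) (M : structure L).

Fixpoint eval (e : nat -> M) (t : term L) : M :=
  match t with
  | tvar i => e i
  | tapp f ts => funI (fun j => eval e (ts j))
  end.

Definition upd (e : nat -> M) (i : nat) (a : M) : nat -> M :=
  fun j => if j == i then a else e j.

Fixpoint sat (e : nat -> M) (p : formula L) : Prop :=
  match p with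
  | fFalse => False
  | fEq t1 t2 => eval e t1 = eval e t2
  | fRel r ts => relI (fun j => eval e (ts j))
  | fImp p q => sat e p -> sat e q
  | fAll i p => forall a : M, sat (upd e i a) p
  end.

Definition assign (s : seq M) (e0 : nat -> M) : nat -> M :=
  fun i => nth (e0 i) s i.

(* X (a set of tuples encoded by enc) is definable with parameters from C:
   it is the solution set in M of a formula phi(v, c) with c from C,
   independently of the values of any other variables. *)
Definition Definable {V : Type} (enc : V -> seq M) (C : M -> Prop)
  (X : V -> Prop) : Prop :=
  exists (p : formula L) (c : seq M),
    (forall z, List.In z c -> C z) /\
    forall (v : V) (e0 : nat -> M), X v <-> sat (assign (enc v ++ c) e0) p.

Definition defx (n : nat) (C : M -> Prop) (X : n.-tuple M -> Prop) :=
  Definable (fun t : n.-tuple M => tval t) C X.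
Definition defxy (n m : nat) (C : M -> Prop)
  (X : n.-tuple M * m.-tuple M -> Prop) :=
  Definable (fun p : n.-tuple M * m.-tuple M => tval p.1 ++ tval p.2) C X.

(* finitely additive probability measures on the Boolean algebra of
   C-definable sets (= formulas modulo T with parameters in C) *)
Definition is_kmeasure {V : Type} (D : (V -> Prop) -> Prop)
  (mu : (V -> Prop) -> R) : Prop :=
  (forall X Y, D X -> D Y -> (forall v, X v <-> Y v) -> mu X = mu Y) /\
  (forall X, D X -> Rle R0 (mu X)) /\
  mu (fun _ => True) = R1 /\
  (forall X Y, D X -> D Y -> (forall v, ~ (X v /\ Y v)) ->
     mu (fun v => X v \/ Y v) = Rplus (mu X) (mu Y)).

Definition agree {V : Type} (D : (V -> Prop) -> Prop)
  (mu1 mu2 : (V -> Prop) -> R) : Prop :=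
  forall X, D X -> mu1 X = mu2 X.

Definition setTM : M -> Prop := fun _ => True.

Definition pi_x (n m : nat) (w : (n.-tuple M * m.-tuple M -> Prop) -> R)
  : (n.-tuple M -> Prop) -> R := fun X => w (fun p => X p.1).
Definition pi_y (n m : nat) (w : (n.-tuple M * m.-tuple M -> Prop) -> R)
  : (m.-tuple M -> Prop) -> R := fun Y => w (fun p => Y p.2).

Definition is_am (n m : nat) (C : M -> Prop)
  (w : (n.-tuple M * m.-tuple M -> Prop) -> R) : Prop :=
  is_kmeasure (defxy C) w /\
  forall X Y, defx C X -> defx C Y ->
    w (fun p => X p.1 /\ Y p.2) = Rmult (pi_x w X) (pi_y w Y).

Definition Amal (n m : nat) (A : M -> Prop)
  (lam : (n.-tuple M * m.-tuple M -> Prop) -> R)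
  (mu : (n.-tuple M -> Prop) -> R)
  (w : (n.-tuple M * m.-tuple M -> Prop) -> R) : Prop :=
  is_am setTM w /\ agree (defxy A) w lam /\ agree (defx setTM) (pi_x w) mu.

Definition tri (n m : nat) (A : M -> Prop)
  (mu : (n.-tuple M -> Prop) -> R) (nu : (m.-tuple M -> Prop) -> R) : Prop :=
  exists lam : (n.-tuple M * m.-tuple M -> Prop) -> R,
    is_kmeasure (defxy A) lam /\
    agree (defx A) (pi_x lam) mu /\
    (exists w, Amal A lam mu w) /\
    (forall w, Amal A lam mu w -> agree (defx setTM) (pi_y w) nu).

Definition addparams (A : M -> Prop) (b : seq M) : M -> Prop :=
  fun z => A z \/ List.In z b.

Definition localize (m : nat) (nu : (m.-tuple M -> Prop) -> R)
  (Phi : m.-tuple M -> Prop) : (m.-tuple M -> Prop) -> R :=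
  fun Psi => Rdiv (nu (fun v => Phi v /\ Psi v)) (nu Phi).

End Semantics.

From Stdlib Require Import Reals List.
From mathcomp Require Import all_boot zify.
From Stdlib Require Import FunctionalExtensionality PropExtensionality Classical.

Set Implicit Arguments.
Unset Strict Implicit.
Unset Printing Implicit Defensive.

(* Let [w] amalgamate [lam] (over [A]) with [mu]. As [Phi] constrains only [y], the conditional
   of [w] on [Phi(y)] is again amalgamated with [mu]; it is the witness over [A b]. Given any
   amalgam [w'] of that conditional with [mu], gluing [w(Phi(y)) * w'] to the part of [w] on
   [~ Phi(y)] leaves the restriction to [A] unchanged, so the result amalgamates [lam] with [mu]
   and its [y]-projection is [nu]. Comparing with [w], which also projects to [nu], forces the
   [y]-projection of [w'] to be [nu] localized at [Phi]. *)

Section Definability.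
Variables (L : lang) (M : structure L).

Fixpoint trename (s : nat -> nat) (t : term L) : term L :=
  match t with
  | tvar i => tvar L (s i)
  | tapp f ts => @tapp L f (fun j => trename s (ts j))
  end.

Fixpoint frename (s : nat -> nat) (p : formula L) : formula L :=
  match p with
  | fFalse => fFalse L
  | fEq t1 t2 => fEq (trename s t1) (trename s t2)
  | fRel r ts => @fRel L r (fun j => trename s (ts j))
  | fImp p q => fImp (frename s p) (frename s q)
  | fAll i p => fAll (s i) (frename s p)
  end.

Definition fAnd (p q : formula L) : formula L :=
  fImp (fImp p (fImp q (fFalse L))) (fFalse L).

Lemma eval_trename s (e : nat -> M) t :
  eval e (trename s t) = eval (e \o s) t.
Proof.
elim: t => [i|f ts IH] //=.
by congr funI; apply: functional_extensionality => j; apply: IH.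
Qed.

Lemma upd_comp s (e : nat -> M) i a : injective s ->
  upd e (s i) a \o s = upd (e \o s) i a.
Proof.
move=> s_inj; apply: functional_extensionality => j /=; rewrite /upd.
by rewrite (inj_eq s_inj).
Qed.

Lemma sat_frename s p (e : nat -> M) : injective s ->
  sat e (frename s p) <-> sat (e \o s) p.
Proof.
move=> s_inj; elim: p e => [|t1 t2|r ts|p IHp q IHq|i p IHp] e /=.
- by [].
- by rewrite !eval_trename.
- have -> : (fun j => eval e (trename s (ts j))) = (fun j => eval (e \o s) (ts j))
    by apply: functional_extensionality => j; rewrite eval_trename.
  by [].
- by rewrite IHp IHq.
- by split=> H a; move: (H a); rewrite IHp upd_comp.
Qed.

Lemma sat_fAnd (e : nat -> M) p q : sat e (fAnd p q) <-> sat e p /\ sat e q.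
Proof.
split=> [H|[Hp Hq] H]; last exact: H.
by apply: NNPP => H'; apply: H => Hp Hq; apply: H'.
Qed.

Lemma assign_id (s : seq M) e :
  (forall j x, j < size s -> e j = nth x s j) -> assign s e = e.
Proof.
move=> es; apply: functional_extensionality => j; rewrite /assign.
by case: (ltnP j (size s)) => [/es <-|/(nth_default _) ->].
Qed.

Lemma assign_nth (s : seq M) e0 j x : j < size s -> assign s e0 j = nth x s j.
Proof. by move=> js; apply: set_nth_default. Qed.

Lemma Definable_mono V (enc : V -> seq M) (C C' : M -> Prop) X :
  (forall z, C z -> C' z) -> Definable enc C X -> Definable enc C' X.
Proof. by move=> CC' [p [c [cC h]]]; exists p, c; split=> // z /cC /CC'. Qed.

Lemma Definable_not V (enc : V -> seq M) C X :
  Definable enc C X -> Definable enc C (fun v => ~ X v).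
Proof.
move=> [p [c [cC h]]]; exists (fImp p (fFalse L)), c; split=> // v e0 /=.
by rewrite (h v e0).
Qed.

Lemma Definable_and V (enc : V -> seq M) C k X Y :
  (forall v, size (enc v) = k) ->
  Definable enc C X -> Definable enc C Y -> Definable enc C (fun v => X v /\ Y v).
Proof.
move=> enc_k [p1 [c1 [c1C h1]]] [p2 [c2 [c2C h2]]].
(* Variables of [p2] past the tuple are shifted beyond the parameters [c1] of [p1]. *)
pose s j := if j < k then j else j + size c1.
have s_inj : injective s by move=> i j; rewrite /s; do 2 case: ltnP => ?; lia.
exists (fAnd p1 (frename s p2)), (c1 ++ c2); split.
  by move=> z; rewrite in_app_iff => -[/c1C|/c2C].
move=> v e0; set e := assign _ e0.
have e_nth j x : j < size (enc v ++ c1 ++ c2) -> e j = nth x (enc v ++ c1 ++ c2) j.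
  exact: assign_nth.
rewrite sat_fAnd sat_frename // (h1 v e) (h2 v (e \o s)).
rewrite (assign_id (s := enc v ++ c1)); last first.
  move=> j x js; rewrite (e_nth _ x); last by rewrite catA size_cat ltn_addr.
  by rewrite catA nth_cat js.
rewrite assign_id //.
move=> j x; rewrite size_cat enc_k => js /=; rewrite /s.
rewrite (e_nth _ x); last by rewrite !size_cat enc_k; case: (ltnP j k) => ?; lia.
rewrite !nth_cat enc_k; case: (ltnP j k) => jk; first by rewrite jk.
rewrite ifF; last lia.
rewrite ifF; last lia.
by congr nth; lia.
Qed.

Lemma defx_and n C (X Y : n.-tuple M -> Prop) :
  defx C X -> defx C Y -> defx C (fun v => X v /\ Y v).
Proof. by apply: Definable_and => v; apply: size_tuple. Qed.

Lemma defxy_and n m C (X Y : n.-tuple M * m.-tuple M -> Prop) :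
  defxy C X -> defxy C Y -> defxy C (fun v => X v /\ Y v).
Proof. by apply: Definable_and => v; rewrite size_cat !size_tuple. Qed.

Lemma defxy_not n m C (X : n.-tuple M * m.-tuple M -> Prop) :
  defxy C X -> defxy C (fun v => ~ X v).
Proof. exact: Definable_not. Qed.

Lemma defxy_snd n m C (Y : m.-tuple M -> Prop) :
  defx C Y -> defxy (n := n) C (fun v => Y v.2).
Proof.
move=> [p [c [cC h]]]; exists (frename (addn^~ n) p), c; split=> // v e0.
set e := assign _ e0; rewrite sat_frename; last exact: addIn.
rewrite (h v.2 (e \o addn^~ n)) assign_id // => j x js /=.
rewrite /e (assign_nth _ x) -catA; last by rewrite !size_cat size_tuple addnC ltn_add2l -size_cat.
by rewrite nth_cat size_tuple ltnNge leq_addl /= addnK.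
Qed.

End Definability.

Lemma predE V (P Q : V -> Prop) : (forall v, P v <-> Q v) -> P = Q.
Proof.
by move=> PQ; apply: functional_extensionality => v; apply: propositional_extensionality.
Qed.

Local Open Scope R_scope.

Lemma is_kmeasure_sub V (D D' : (V -> Prop) -> Prop) w :
  (forall X, D X -> D' X) -> is_kmeasure D' w -> is_kmeasure D w.
Proof.
move=> DD' [w_ext [w_ge0 [w1 w_add]]]; split; [|split; [|split]] => //.
- by move=> X Y /DD' X_def /DD' Y_def; apply: w_ext.
- by move=> X /DD'; apply: w_ge0.
- by move=> X Y /DD' X_def /DD' Y_def; apply: w_add.
Qed.

Section Conditioning.
Variables (V : Type) (D : (V -> Prop) -> Prop).
Hypotheses (D_and : forall X Y, D X -> D Y -> D (fun v => X v /\ Y v))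
           (D_not : forall X, D X -> D (fun v => ~ X v)).

Definition cond (w : (V -> Prop) -> R) (P : V -> Prop) : (V -> Prop) -> R :=
  fun X => w (fun v => P v /\ X v) / w P.

(* [w] with its conditional on [P] replaced by [w']; for [w' = cond w P] this is [w] again. *)
Definition replace_cond (w : (V -> Prop) -> R) (P : V -> Prop)
  (w' : (V -> Prop) -> R) : (V -> Prop) -> R :=
  fun X => w P * w' X + w (fun v => ~ P v /\ X v).

Variables (w : (V -> Prop) -> R) (P : V -> Prop).
Hypotheses (w_meas : is_kmeasure D w) (P_def : D P).

Lemma kmeasure_split X : D X ->
  w X = w (fun v => P v /\ X v) + w (fun v => ~ P v /\ X v).
Proof.
move=> X_def; case: w_meas => _ [_ [_ w_add]].
rewrite -w_add; [|exact: D_and|exact: D_and (D_not _) _|by move=> v; tauto].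
by congr w; apply: predE => v; have := classic (P v); tauto.
Qed.

Lemma kmeasure_compl : w (fun v => ~ P v) = R1 - w P.
Proof.
case: w_meas => _ [_ [w1 w_add]].
rewrite -w1 (_ : (fun _ => True) = (fun v => P v \/ ~ P v)).
  by rewrite w_add //; [ring|exact: D_not|by move=> v; tauto].
by apply: predE => v; have := classic (P v); tauto.
Qed.

Lemma is_kmeasure_cond : 0 < w P -> is_kmeasure D (cond w P).
Proof.
move=> wP_gt0; case: w_meas => w_ext [w_ge0 [_ w_add]].
split; [|split; [|split]]; rewrite /cond.
- move=> X Y X_def Y_def XY; congr (_ / _).
  by apply: w_ext => [||v]; [exact: D_and|exact: D_and|rewrite XY].
- move=> X X_def; apply: Rmult_le_pos; first exact/w_ge0/D_and.
  exact/Rlt_le/Rinv_0_lt_compat.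
- rewrite (_ : (fun v => P v /\ True) = P); first by field; apply: Rgt_not_eq.
  by apply: predE; tauto.
- move=> X Y X_def Y_def XY; rewrite -Rdiv_plus_distr -w_add;
    [|exact: D_and|exact: D_and|by move=> v; have := XY v; tauto].
  by congr (w _ / _); apply: predE; tauto.
Qed.

Lemma is_kmeasure_replace_cond w' :
  is_kmeasure D w' -> is_kmeasure D (replace_cond w P w').
Proof.
case: (w_meas) => w_ext [w_ge0 [_ w_add]] [w'_ext [w'_ge0 [w'1 w'_add]]].
have nP_def := D_not P_def.
split; [|split; [|split]]; rewrite /replace_cond.
- move=> X Y X_def Y_def XY; rewrite (w'_ext X Y) //; congr (_ + _).
  by apply: w_ext => [||v]; [exact: D_and|exact: D_and|rewrite XY].
- move=> X X_def; apply: Rplus_le_le_0_compat; last exact/w_ge0/D_and.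
  by apply: Rmult_le_pos; [apply: w_ge0|apply: w'_ge0].
- rewrite w'1 (_ : (fun v => ~ P v /\ True) = (fun v => ~ P v)).
    by rewrite kmeasure_compl; ring.
  by apply: predE; tauto.
- move=> X Y X_def Y_def XY; rewrite w'_add // (_ : (fun v => ~ P v /\ (X v \/ Y v)) =
      (fun v => (~ P v /\ X v) \/ (~ P v /\ Y v))); last by apply: predE; tauto.
  rewrite w_add; [ring|exact: D_and|exact: D_and|by move=> v; have := XY v; tauto].
Qed.

Lemma replace_condE w' X : D X -> w P <> 0 ->
  replace_cond w P w' X = w X <-> w' X = cond w P X.
Proof.
move=> X_def wP_neq0; rewrite /replace_cond /cond (kmeasure_split X_def).
by split=> [/Rplus_eq_reg_r <-|->]; field.
Qed.

End Conditioning.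

Section Amalgamation.
Variables (L : lang) (M : structure L) (n m : nat) (C : M -> Prop).
Local Notation xy := (n.-tuple M * m.-tuple M)%type.
Variables (w : (xy -> Prop) -> R) (Phi : m.-tuple M -> Prop).
Hypotheses (w_am : is_am C w) (Phi_def : defx C Phi).
Local Notation Phi2 := (fun v : xy => Phi v.2).

Let xy_and := @defxy_and L M n m C.
Let xy_not := @defxy_not L M n m C.
Let Phi2_def : defxy C Phi2 := defxy_snd n Phi_def.

Lemma am_mulC X Y : defx C X -> defx C Y ->
  w (fun v => Y v.2 /\ X v.1) = pi_x w X * pi_y w Y.
Proof.
move=> X_def Y_def; rewrite -(proj2 w_am X Y) //.
by congr w; apply: predE; tauto.
Qed.

Lemma pi_x_cond X : defx C X -> w Phi2 <> 0 -> pi_x (cond w Phi2) X = pi_x w X.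
Proof. by move=> X_def wPhi_neq0; rewrite {1}/pi_x /cond am_mulC // /pi_y; field. Qed.

Lemma is_am_cond : 0 < w Phi2 -> is_am C (cond w Phi2).
Proof.
move=> wPhi_gt0; split.
  exact: (is_kmeasure_cond xy_and (proj1 w_am) Phi2_def wPhi_gt0).
move=> X Y X_def Y_def; rewrite pi_x_cond //; last exact: Rgt_not_eq.
rewrite /cond /pi_y /= (_ : (fun v => Phi v.2 /\ X v.1 /\ Y v.2) =
  (fun v => (Phi v.2 /\ Y v.2) /\ X v.1)); last by apply: predE; tauto.
rewrite (am_mulC (Y := fun u => Phi u /\ Y u)) //; last exact: defx_and.
by rewrite /pi_y; field; apply: Rgt_not_eq.
Qed.

Lemma pi_x_replace_cond w' X : defx C X -> pi_x w' X = pi_x w X ->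
  pi_x (replace_cond w Phi2 w') X = pi_x w X.
Proof.
move=> X_def; rewrite /pi_x /replace_cond => ->.
rewrite (am_mulC (Y := fun u => ~ Phi u)) //; last exact: Definable_not.
rewrite /pi_y (kmeasure_compl xy_not (proj1 w_am) Phi2_def) /pi_x; ring.
Qed.

Lemma is_am_replace_cond w' : is_am C w' -> agree (defx C) (pi_x w') (pi_x w) ->
  is_am C (replace_cond w Phi2 w').
Proof.
move=> w'_am w'_x; split.
  exact: (is_kmeasure_replace_cond xy_and xy_not (proj1 w_am) Phi2_def (proj1 w'_am)).
move=> X Y X_def Y_def; rewrite pi_x_replace_cond ?w'_x // /replace_cond (proj2 w'_am) //.
rewrite /pi_y (_ : (fun v => ~ Phi v.2 /\ X v.1 /\ Y v.2) =
  (fun v => (~ Phi v.2 /\ Y v.2) /\ X v.1)); last by apply: predE; tauto.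
rewrite (am_mulC (Y := fun u => ~ Phi u /\ Y u)) //; last exact/defx_and/Y_def/Definable_not.
by rewrite w'_x // /pi_y /=; ring.
Qed.

Lemma pi_y_replace_cond w' Y : defx C Y -> w Phi2 <> 0 ->
  pi_y (replace_cond w Phi2 w') Y = pi_y w Y -> pi_y w' Y = localize (pi_y w) Phi Y.
Proof.
move=> Y_def wPhi_neq0.
by rewrite /pi_y (replace_condE xy_and xy_not (proj1 w_am) Phi2_def _ (defxy_snd n Y_def)).
Qed.

End Amalgamation.

Section Localization.
Variables (L : lang) (M : structure L) (n m : nat).
Local Notation xy := (n.-tuple M * m.-tuple M)%type.
Variables (A : M -> Prop) (lam : (xy -> Prop) -> R) (mu : (n.-tuple M -> Prop) -> R).
Variables (w : (xy -> Prop) -> R) (Phi : m.-tuple M -> Prop).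
Hypotheses (w_amal : Amal A lam mu w) (Phi_def : defx (@setTM _ M) Phi)
           (wPhi_gt0 : 0 < w (fun v => Phi v.2)).
Local Notation Phi2 := (fun v : xy => Phi v.2).

Lemma Amal_cond A' : Amal A' (cond w Phi2) mu (cond w Phi2).
Proof.
case: w_amal => w_am [_ w_mu]; split; first exact: is_am_cond.
split=> // X X_def; rewrite (pi_x_cond w_am Phi_def X_def) ?w_mu //; exact: Rgt_not_eq.
Qed.

Lemma Amal_replace_cond A' w' : (forall X : xy -> Prop, defxy A X -> defxy A' X) ->
  Amal A' (cond w Phi2) mu w' -> Amal A lam mu (replace_cond w Phi2 w').
Proof.
move=> AA' [w'_am [w'_cond w'_mu]]; case: w_amal => w_am [w_lam w_mu].
have w'_x : agree (defx (@setTM _ M)) (pi_x w') (pi_x w) by move=> X X_def; rewrite w'_mu ?w_mu.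
split; first exact: is_am_replace_cond.
split=> X X_def; last by rewrite (pi_x_replace_cond w_am Phi_def X_def) ?w'_x ?w_mu.
have X_defT : defxy (@setTM _ M) X by apply: Definable_mono X_def.
rewrite -w_lam //; apply/(replace_condE (@defxy_and _ _ n m _) (@defxy_not _ _ n m _)
  (proj1 w_am) (defxy_snd n Phi_def) w' X_defT (Rgt_not_eq _ _ wPhi_gt0)).
exact: w'_cond (AA' X X_def).
Qed.

End Localization.

Theorem proposition5p7 (L : lang) (U : structure L) (n m : nat)
  (A : U -> Prop) (b : seq U)
  (mu : (n.-tuple U -> Prop) -> R) (nu : (m.-tuple U -> Prop) -> R)
  (Phi : m.-tuple U -> Prop) :
  is_kmeasure (defx (@setTM _ U)) mu ->
  is_kmeasure (defx (@setTM _ U)) nu ->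
  defx (fun z => List.In z b) Phi ->
  Rlt R0 (nu Phi) -> Rlt (nu Phi) R1 ->
  tri A mu nu ->
  tri (addparams A b) mu (localize nu Phi).
Proof.
move=> _ _ Phi_def nuPhi_gt0 _ [lam [_ [_ [[w w_amal] w_nu]]]].
have PhiT : defx (@setTM _ U) Phi by apply: Definable_mono Phi_def.
have wPhi : w (fun v => Phi v.2) = nu Phi := w_nu w w_amal Phi PhiT.
have wPhi_gt0 : 0 < w (fun v => Phi v.2) by rewrite wPhi.
have cond_amal := Amal_cond w_amal PhiT wPhi_gt0 (addparams A b).
exists (cond w (fun v => Phi v.2)); split; [|split; [|split]].
- by apply: is_kmeasure_sub (proj1 (proj1 cond_amal)) => X; apply: Definable_mono.
- by move=> X X_def; apply/(proj2 (proj2 cond_amal))/(Definable_mono _ X_def).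
- by exists (cond w (fun v => Phi v.2)).
move=> w' w'_amal Y Y_def.
have AAb (X : n.-tuple U * m.-tuple U -> Prop) :
  defxy A X -> defxy (addparams A b) X by apply: Definable_mono; left.
have glued_amal := Amal_replace_cond w_amal PhiT wPhi_gt0 AAb w'_amal.
rewrite (pi_y_replace_cond (proj1 w_amal) PhiT Y_def).
- by rewrite /localize !(w_nu w w_amal) ?wPhi //; apply: defx_and.
- by rewrite wPhi; apply: Rgt_not_eq.
- by rewrite !w_nu.
Qed.
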